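(* Under the hypotheses of the previous proposition (Assumption (A), $q\in[0,1)$, $l\ge0$, $S_H>0$, positive epidemiological parameters, $\hat R_e h(p(0),q)>1$, $n=1$, and existence of an equilibrium of (O) with $I_H^*>0$), if $\gamma\ge\mu$ then this equilibrium is locally asymptotically stable for every $k>0$.
   Context: Assumption (A): $a,w:[0,\infty)\to(0,\infty)$ are continuously differentiable with $a'(x)>0$ and $w'(x)\le0$ for all $x\ge0$. Let $c(p,q):=1-p(1-q)$, $p(x):=a(x)/(a(x)+w(x))$, $h(p,q):=c(p,q)/(c(p,q)+l)$, $f(x):=h(p(x),q)$, and $\hat R_e:=\sqrt{\frac{\beta_{H\leftarrow M}\beta_{M\leftarrow H}}{\gamma\mu}\rho S_H}$. For $n=1$, system (O) is, with $S_H>0$ fixed, $$\dot I_H=\beta_{H\leftarrow M}\rho S_H f(J)I_M-\gamma I_H,\qquad \dot I_M=\beta_{M\leftarrow H}f(J)I_H-\mu I_M,\qquad \dot J=kI_H-kJ.$$ *)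

From Stdlib Require Import Reals Lra.
From Coquelicot Require Import Coquelicot.
Open Scope R_scope.

Definition cfun (p q : R) : R := 1 - p * (1 - q).
Definition hfun (l p q : R) : R := cfun p q / (cfun p q + l).
Definition pfun (a w : R -> R) (x : R) : R := a x / (a x + w x).
Definition ffun (a w : R -> R) (l q : R) (x : R) : R := hfun l (pfun a w x) q.

Definition Re_hat (bHM bMH gamma mu rho SH : R) : R :=
  sqrt (bHM * bMH / (gamma * mu) * rho * SH).

Definition rhs_IH (a w : R -> R) (l q bHM rho SH gamma : R)
  (IH IM J : R) : R := bHM * rho * SH * ffun a w l q J * IM - gamma * IH.
Definition rhs_IM (a w : R -> R) (l q bMH mu : R)
  (IH IM J : R) : R := bMH * ffun a w l q J * IH - mu * IM.
Definition rhs_J (k : R) (IH IM J : R) : R := k * IH - k * J.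

Definition dist3 (x1 x2 x3 y1 y2 y3 : R) : R :=
  sqrt ((x1 - y1) ^ 2 + (x2 - y2) ^ 2 + (x3 - y3) ^ 2).

Definition ode_solution (F1 F2 F3 : R -> R -> R -> R) (T : Rbar)
  (x1 x2 x3 : R -> R) : Prop :=
  (forall t, 0 < t -> Rbar_lt t T ->
     is_derive x1 t (F1 (x1 t) (x2 t) (x3 t)) /\
     is_derive x2 t (F2 (x1 t) (x2 t) (x3 t)) /\
     is_derive x3 t (F3 (x1 t) (x2 t) (x3 t))) /\
  filterlim x1 (at_right 0) (locally (x1 0)) /\
  filterlim x2 (at_right 0) (locally (x2 0)) /\
  filterlim x3 (at_right 0) (locally (x3 0)).

Definition locally_asymptotically_stable (F1 F2 F3 : R -> R -> R -> R)
  (e1 e2 e3 : R) : Prop :=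
  (forall eps, 0 < eps -> exists delta, 0 < delta /\
     forall (T : Rbar) x1 x2 x3, ode_solution F1 F2 F3 T x1 x2 x3 ->
       dist3 (x1 0) (x2 0) (x3 0) e1 e2 e3 < delta ->
       forall t, 0 <= t -> Rbar_lt t T ->
         dist3 (x1 t) (x2 t) (x3 t) e1 e2 e3 < eps) /\
  (exists delta0, 0 < delta0 /\
     forall x1 x2 x3, ode_solution F1 F2 F3 p_infty x1 x2 x3 ->
       dist3 (x1 0) (x2 0) (x3 0) e1 e2 e3 < delta0 ->
       is_lim x1 p_infty e1 /\ is_lim x2 p_infty e2 /\ is_lim x3 p_infty e3).

(* In the coordinates x = IH - IHs, s = mu x + A (IM - IMs), z = J - Js, with
   A = bHM rho SH f(Js), the linearisation of (O) at the equilibrium is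
     x' = -(gamma + mu) x + s - a z,   s' = -2 mu a z,   z' = k x - k z,
   where a = - bHM rho SH f'(Js) IMs > 0: f'(Js) < 0 needs l > 0, which holds because
   Re_hat f(Js) = 1 at the equilibrium while Re_hat h(p(0), q) > 1.  For this system an
   explicit quadratic form V has derivative -(W1 x^2 + W2 s^2 + W3 z^2) along the linear
   flow, and for gamma >= mu both V and the W_i are positive.  The nonlinear terms are
   o(|z|) by differentiability of f, so V' <= - c V near the equilibrium; V is then
   nonincreasing along solutions starting close enough and decays like 1/t, which gives
   stability and attractivity. *)
From Stdlib Require Import Reals Lra Psatz.
From Coquelicot Require Import Coquelicot.
Open Scope R_scope.

Lemma filterlim_locally_abs {T : Type} (F : (T -> Prop) -> Prop) (v : T -> R) (l eps : R) :
  filterlim v F (locally l) -> 0 < eps -> F (fun t => Rabs (v t - l) < eps).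
Proof.
  intros Hv Heps. apply (Hv (fun y => Rabs (y - l) < eps)).
  exists (mkposreal eps Heps). intros y Hy. exact Hy.
Qed.

Lemma continuous_abs_lt (v : R -> R) (t0 eps : R) :
  continuous v t0 -> 0 < eps ->
  exists del, 0 < del /\ forall t, Rabs (t - t0) < del -> Rabs (v t - v t0) < eps.
Proof.
  intros Hv Heps. destruct (filterlim_locally_abs _ _ _ _ Hv Heps) as [del Hdel].
  exists del. split; [apply cond_pos | exact Hdel].
Qed.

Lemma right_continuous_abs_lt (v : R -> R) (eps : R) :
  filterlim v (at_right 0) (locally (v 0)) -> 0 < eps ->
  exists del, 0 < del /\ forall t, 0 < t < del -> Rabs (v t - v 0) < eps.
Proof.
  intros Hv Heps. destruct (filterlim_locally_abs _ _ _ _ Hv Heps) as [del Hdel].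
  exists del. split; [apply cond_pos|]. intros t Ht. apply Hdel; [|lra].
  change (Rabs (t - 0) < del). rewrite Rabs_right; lra.
Qed.

Lemma is_derive_continuity_pt (v : R -> R) (t dv : R) : is_derive v t dv -> continuity_pt v t.
Proof.
  intros Hv. apply continuity_pt_filterlim, (@ex_derive_continuous R_AbsRing R_NormedModule).
  now exists dv.
Qed.

Section RealLimits.
Context {F : (R -> Prop) -> Prop} {FF : Filter F}.

Lemma filterlim_Rplus (u v : R -> R) (lu lv : R) :
  filterlim u F (locally lu) -> filterlim v F (locally lv) ->
  filterlim (fun s => u s + v s) F (locally (lu + lv)).
Proof.
  intros Hu Hv. eapply filterlim_comp_2; [exact Hu | exact Hv | apply (filterlim_plus lu lv)].
Qed.

Lemma filterlim_Rmult (u v : R -> R) (lu lv : R) :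
  filterlim u F (locally lu) -> filterlim v F (locally lv) ->
  filterlim (fun s => u s * v s) F (locally (lu * lv)).
Proof.
  intros Hu Hv. eapply filterlim_comp_2; [exact Hu | exact Hv | apply (filterlim_mult lu lv)].
Qed.

Lemma filterlim_Rconst (c : R) : filterlim (fun _ => c) F (locally c).
Proof. apply filterlim_const. Qed.

Lemma filterlim_Rminus (u v : R -> R) (lu lv : R) :
  filterlim u F (locally lu) -> filterlim v F (locally lv) ->
  filterlim (fun s => u s - v s) F (locally (lu - lv)).
Proof.
  intros Hu Hv. replace (lu - lv) with (lu + -1 * lv) by ring.
  apply (filterlim_ext (fun s => u s + -1 * v s)); [intros; ring|].
  apply filterlim_Rplus; [exact Hu|]. apply filterlim_Rmult; [apply filterlim_Rconst | exact Hv].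
Qed.

End RealLimits.

Ltac filterlim_arith := repeat match goal with
  | |- filterlim (fun _ => ?c) _ _ => apply filterlim_Rconst
  | |- filterlim (fun _ => _ + _) _ _ => apply filterlim_Rplus
  | |- filterlim (fun _ => _ - _) _ _ => apply filterlim_Rminus
  | |- filterlim (fun _ => _ * _) _ _ => apply filterlim_Rmult
  | H : filterlim ?u ?F _ |- filterlim ?u ?F _ => exact H
  | H : filterlim ?u ?F _ |- filterlim (fun t => ?u t) ?F _ => exact H
  end.

Lemma last_crossing (v : R -> R) (t1 m : R) :
  0 <= t1 ->
  (forall s, 0 < s <= t1 -> continuous v s) ->
  filterlim v (at_right 0) (locally (v 0)) ->
  v 0 < m < v t1 ->
  exists tau, 0 < tau < t1 /\ v tau = m /\ forall s, tau < s <= t1 -> m < v s.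
Proof.
  intros Ht1 Hcont Hrc Hm.
  set (E := fun s => 0 <= s <= t1 /\ v s <= m).
  destruct (completeness E) as [tau [Hub Hlub]].
  { exists t1. intros s [Hs _]. lra. }
  { exists 0. split; lra. }
  assert (Htau0 : 0 <= tau) by (apply Hub; split; lra).
  assert (Htau1 : tau <= t1) by (apply Hlub; intros s [Hs _]; lra).
  assert (Habove : forall s, tau < s <= t1 -> m < v s).
  { intros s Hs. destruct (Rlt_or_le m (v s)) as [H|H]; [exact H|].
    enough (s <= tau) by lra. apply Hub. split; lra. }
  assert (Hle : v tau <= m).
  { destruct (Rle_or_lt (v tau) m) as [H|H]; [exact H|exfalso].
    destruct Htau0 as [Htau0| <-]; [|lra].
    destruct (continuous_abs_lt v tau (v tau - m) (Hcont tau (conj Htau0 Htau1)))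
      as [del [Hdel Hc]]; [lra|].
    enough (tau <= tau - del / 2) by lra.
    apply Hlub. intros s [Hs Hvs].
    destruct (Rle_or_lt s (tau - del / 2)) as [H1|H1]; [exact H1|exfalso].
    assert (s <= tau) by (apply Hub; split; assumption).
    specialize (Hc s ltac:(rewrite Rabs_left1; lra)). apply Rabs_def2 in Hc. lra. }
  assert (Hge : m <= v tau).
  { destruct (Rle_or_lt m (v tau)) as [H|H]; [exact H|exfalso].
    assert (Htau1' : tau < t1) by (destruct Htau1 as [?| ->]; lra).
    assert (Hright : exists del, 0 < del /\ forall s, tau < s < tau + del -> v s < m).
    { destruct Htau0 as [Htau0| <-].
      - destruct (continuous_abs_lt v tau (m - v tau) (Hcont tau (conj Htau0 Htau1)))
          as [del [Hdel Hc]]; [lra|].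
        exists del. split; [exact Hdel|]. intros s Hs.
        specialize (Hc s ltac:(rewrite Rabs_right; lra)). apply Rabs_def2 in Hc. lra.
      - destruct (right_continuous_abs_lt v (m - v 0) Hrc) as [del [Hdel Hc]]; [lra|].
        exists del. split; [exact Hdel|]. intros s Hs.
        specialize (Hc s ltac:(lra)). apply Rabs_def2 in Hc. lra. }
    destruct Hright as [del [Hdel Hc]].
    set (s := tau + Rmin del (t1 - tau) / 2).
    assert (0 < Rmin del (t1 - tau)) by (apply Rmin_pos; lra).
    assert (Rmin del (t1 - tau) <= del) by apply Rmin_l.
    assert (Rmin del (t1 - tau) <= t1 - tau) by apply Rmin_r.
    specialize (Habove s ltac:(unfold s; lra)). specialize (Hc s ltac:(unfold s; lra)). lra. }
  exists tau. repeat split; try lra.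
  - destruct Htau0 as [?| <-]; lra.
  - destruct Htau1 as [?| ->]; lra.
  - exact Habove.
Qed.

(* Past the last crossing [tau] of a level [m] with [v 0 < m < min (v t1) L], one has
   [v > m = v tau] although [v' <= 0] near [tau]. *)
Lemma nonincreasing_below_level (v dv : R -> R) (T : Rbar) (L : R) :
  (forall t, 0 < t -> Rbar_lt t T -> is_derive v t (dv t)) ->
  filterlim v (at_right 0) (locally (v 0)) ->
  v 0 < L ->
  (forall t, 0 < t -> Rbar_lt t T -> v t < L -> dv t <= 0) ->
  forall t, 0 <= t -> Rbar_lt t T -> v t <= v 0.
Proof.
  intros Hd Hrc HL Hneg t1 Ht1 Ht1T.
  destruct (Rle_or_lt (v t1) (v 0)) as [Hle|Hgt]; [exact Hle|exfalso].
  assert (HinT : forall s, s <= t1 -> Rbar_lt s T).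
  { intros s Hs. apply Rbar_le_lt_trans with (Finite t1); [simpl; lra|exact Ht1T]. }
  assert (Hcont : forall s, 0 < s <= t1 -> continuous v s).
  { intros s Hs. apply (@ex_derive_continuous R_AbsRing R_NormedModule).
    exists (dv s). apply Hd; [lra | apply HinT; lra]. }
  set (m := (v 0 + Rmin (v t1) L) / 2).
  assert (v 0 < m < v t1 /\ m < L) by (unfold m, Rmin; destruct Rle_dec; lra).
  destruct (last_crossing v t1 m Ht1 Hcont Hrc ltac:(lra)) as [tau [Htau [Hvtau Habove]]].
  destruct (continuous_abs_lt v tau (L - m) (Hcont tau ltac:(lra))) as [del [Hdel Hc]]; [lra|].
  set (s := tau + Rmin del (t1 - tau) / 2).
  assert (0 < Rmin del (t1 - tau)) by (apply Rmin_pos; lra).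
  assert (Rmin del (t1 - tau) <= del) by apply Rmin_l.
  assert (Rmin del (t1 - tau) <= t1 - tau) by apply Rmin_r.
  assert (Hs : tau < s <= t1) by (unfold s; lra).
  destruct (MVT_gen v tau s dv) as [c [Hc1 Hmvt]].
  - intros x Hx. rewrite Rmin_left, Rmax_right in Hx by lra. apply Hd; [lra|apply HinT; lra].
  - intros x Hx. rewrite Rmin_left, Rmax_right in Hx by lra.
    apply is_derive_continuity_pt with (dv x). apply Hd; [lra|apply HinT; lra].
  - rewrite Rmin_left, Rmax_right in Hc1 by lra.
    assert (Hvc : v c < L).
    { specialize (Hc c ltac:(rewrite Rabs_right; unfold s in *; lra)).
      apply Rabs_def2 in Hc. lra. }
    assert (dv c <= 0) by (apply Hneg; [lra|apply HinT; lra|exact Hvc]).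
    assert (dv c * (s - tau) <= 0) by (apply Rmult_le_0_r; lra).
    specialize (Habove s Hs). lra.
Qed.

Lemma linear_decay (v dv : R -> R) (c t0 : R) : 0 < c ->
  (forall t, t0 <= t -> is_derive v t (dv t)) ->
  (forall t, t0 <= t -> dv t <= - c * v t) ->
  (forall t, t0 <= t -> 0 <= v t) ->
  forall t, t0 <= t -> v t * (1 + c * (t - t0)) <= v t0.
Proof.
  intros Hc Hd Hneg Hpos t Ht.
  set (dpsi := fun s => dv s * (1 + c * (s - t0)) + v s * c).
  assert (Hpsi : forall s, t0 <= s -> is_derive (fun s => v s * (1 + c * (s - t0))) s (dpsi s)).
  { intros s Hs. specialize (Hd s Hs). auto_derive.
    - now exists (dv s).
    - replace (Derive (fun x => v x) s) with (dv s) by (symmetry; now apply is_derive_unique).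
      unfold dpsi. ring. }
  destruct Ht as [Ht| <-]; [|lra].
  destruct (MVT_gen (fun s => v s * (1 + c * (s - t0))) t0 t dpsi) as [x [Hx Hmvt]].
  - intros x Hx. rewrite Rmin_left in Hx by lra. apply Hpsi. lra.
  - intros x Hx. rewrite Rmin_left in Hx by lra.
    apply is_derive_continuity_pt with (dpsi x). apply Hpsi. lra.
  - rewrite Rmin_left, Rmax_right in Hx by lra.
    (* [dpsi x <= - c^2 (x - t0) v x <= 0] *)
    assert (Hdpsi : dpsi x <= 0).
    { specialize (Hneg x ltac:(lra)). specialize (Hpos x ltac:(lra)). unfold dpsi.
      assert (0 <= c * (x - t0)) by (apply Rmult_le_pos; lra).
      assert (dv x * (1 + c * (x - t0)) <= - c * v x * (1 + c * (x - t0)))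
        by (apply Rmult_le_compat_r; lra).
      assert (0 <= c * (v x * (c * (x - t0)))) by (repeat apply Rmult_le_pos; lra).
      nra. }
    assert (dpsi x * (t - t0) <= 0) by (apply Rmult_le_0_r; lra).
    replace (1 + c * (t0 - t0)) with 1 in Hmvt by ring. lra.
Qed.

Definition sq_dist3 (x1 x2 x3 y1 y2 y3 : R) : R :=
  (x1 - y1) ^ 2 + (x2 - y2) ^ 2 + (x3 - y3) ^ 2.

Lemma sq_dist3_nonneg x1 x2 x3 y1 y2 y3 : 0 <= sq_dist3 x1 x2 x3 y1 y2 y3.
Proof.
  unfold sq_dist3.
  generalize (pow2_ge_0 (x1 - y1)) (pow2_ge_0 (x2 - y2)) (pow2_ge_0 (x3 - y3)). lra.
Qed.

Lemma sq_dist3_lt_of_dist3_lt x1 x2 x3 y1 y2 y3 rho :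
  dist3 x1 x2 x3 y1 y2 y3 < sqrt rho -> sq_dist3 x1 x2 x3 y1 y2 y3 < rho.
Proof. apply sqrt_lt_0_alt. Qed.

Lemma dist3_lt_of_sq_dist3_lt x1 x2 x3 y1 y2 y3 eps :
  0 < eps -> sq_dist3 x1 x2 x3 y1 y2 y3 < eps ^ 2 -> dist3 x1 x2 x3 y1 y2 y3 < eps.
Proof.
  intros Heps H. unfold dist3. rewrite <- (sqrt_pow2 eps) by lra.
  apply sqrt_lt_1_alt. split; [apply sq_dist3_nonneg | exact H].
Qed.

Lemma abs_lt_of_sq_lt u eps : 0 < eps -> u ^ 2 < eps ^ 2 -> Rabs u < eps.
Proof. intros Heps H. apply Rabs_def1; nra. Qed.

Lemma abs_lt_of_sq_dist3_lt x1 x2 x3 y1 y2 y3 eps :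
  0 < eps -> sq_dist3 x1 x2 x3 y1 y2 y3 < eps ^ 2 ->
  Rabs (x1 - y1) < eps /\ Rabs (x2 - y2) < eps /\ Rabs (x3 - y3) < eps.
Proof.
  unfold sq_dist3. intros Heps H.
  generalize (pow2_ge_0 (x1 - y1)) (pow2_ge_0 (x2 - y2)) (pow2_ge_0 (x3 - y3)). intros.
  repeat split; apply abs_lt_of_sq_lt; lra.
Qed.

Lemma is_lim_of_sq_dist3_decay (x1 x2 x3 : R -> R) (e1 e2 e3 B c : R) : 0 < c ->
  (forall t, 1 <= t -> sq_dist3 (x1 t) (x2 t) (x3 t) e1 e2 e3 * (1 + c * (t - 1)) <= B) ->
  is_lim x1 p_infty e1 /\ is_lim x2 p_infty e2 /\ is_lim x3 p_infty e3.
Proof.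
  intros Hc Hdecay.
  assert (HB : 0 <= B).
  { specialize (Hdecay 1 (Rle_refl 1)). generalize (sq_dist3_nonneg (x1 1) (x2 1) (x3 1) e1 e2 e3).
    replace (1 + c * (1 - 1)) with 1 in Hdecay by ring. lra. }
  assert (Hsmall : forall eps, 0 < eps -> exists M, forall t, M < t ->
             sq_dist3 (x1 t) (x2 t) (x3 t) e1 e2 e3 < eps ^ 2).
  { intros eps Heps. exists (1 + B / (c * eps ^ 2)). intros t Ht.
    assert (He2 : 0 < eps ^ 2) by nra.
    assert (0 <= B / (c * eps ^ 2)) by (apply Rdiv_le_0_compat; nra).
    assert (Hct : eps ^ 2 * (c * (t - 1)) > B).
    { apply Rmult_gt_reg_l with (/ (c * eps ^ 2)); [apply Rinv_0_lt_compat; nra|].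
      replace (/ (c * eps ^ 2) * (eps ^ 2 * (c * (t - 1)))) with (t - 1) by (field; lra).
      unfold Rdiv in *. lra. }
    specialize (Hdecay t ltac:(lra)).
    set (N := sq_dist3 (x1 t) (x2 t) (x3 t) e1 e2 e3) in *.
    destruct (Rlt_or_le N (eps ^ 2)) as [Hlt|Hge]; [exact Hlt|exfalso].
    assert (0 <= c * (t - 1)) by (apply Rmult_le_pos; lra).
    assert (eps ^ 2 * (1 + c * (t - 1)) <= N * (1 + c * (t - 1))) by (apply Rmult_le_compat_r; lra).
    lra. }
  repeat split; apply is_lim_spec; intros eps;
    destruct (Hsmall eps (cond_pos eps)) as [M HM]; exists M; intros t Ht;
    apply (abs_lt_of_sq_dist3_lt _ _ _ _ _ _ _ (cond_pos eps) (HM t Ht)).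
Qed.

Section LyapunovFunction.

Variables (F1 F2 F3 : R -> R -> R -> R) (e1 e2 e3 : R).
Variables (V : R -> R -> R -> R) (DV : R -> R -> R -> R -> R -> R -> R).
Variables (C1 C2 c r : R).
Hypotheses (HC1 : 0 < C1) (HC2 : 0 < C2) (Hc : 0 < c) (Hr : 0 < r).

Hypothesis V_derive : forall (x1 x2 x3 : R -> R) (t v1 v2 v3 : R),
  is_derive x1 t v1 -> is_derive x2 t v2 -> is_derive x3 t v3 ->
  is_derive (fun s => V (x1 s) (x2 s) (x3 s)) t (DV (x1 t) (x2 t) (x3 t) v1 v2 v3).
Hypothesis V_right_continuous : forall x1 x2 x3 : R -> R,
  filterlim x1 (at_right 0) (locally (x1 0)) ->
  filterlim x2 (at_right 0) (locally (x2 0)) ->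
  filterlim x3 (at_right 0) (locally (x3 0)) ->
  filterlim (fun s => V (x1 s) (x2 s) (x3 s)) (at_right 0) (locally (V (x1 0) (x2 0) (x3 0))).
Hypothesis sq_dist3_le_V : forall y1 y2 y3, sq_dist3 y1 y2 y3 e1 e2 e3 <= C1 * V y1 y2 y3.
Hypothesis V_le_sq_dist3 : forall y1 y2 y3, V y1 y2 y3 <= C2 * sq_dist3 y1 y2 y3 e1 e2 e3.
Hypothesis V_decreasing : forall y1 y2 y3, sq_dist3 y1 y2 y3 e1 e2 e3 < r ->
  DV y1 y2 y3 (F1 y1 y2 y3) (F2 y1 y2 y3) (F3 y1 y2 y3) <= - c * V y1 y2 y3.

Lemma V_nonneg y1 y2 y3 : 0 <= V y1 y2 y3.
Proof.
  generalize (sq_dist3_le_V y1 y2 y3) (sq_dist3_nonneg y1 y2 y3 e1 e2 e3). nra.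
Qed.

Lemma sq_dist3_lt_of_V_lt y1 y2 y3 rho :
  V y1 y2 y3 < rho / C1 -> sq_dist3 y1 y2 y3 e1 e2 e3 < rho.
Proof.
  intros HV. specialize (sq_dist3_le_V y1 y2 y3).
  apply Rmult_lt_compat_l with (r := C1) in HV; [|exact HC1].
  replace (C1 * (rho / C1)) with rho in HV by (field; lra). lra.
Qed.

Lemma V_lt_of_dist3_lt y1 y2 y3 rho :
  dist3 y1 y2 y3 e1 e2 e3 < sqrt (rho / C1 / C2) -> V y1 y2 y3 < rho / C1.
Proof.
  intros Hd. apply sq_dist3_lt_of_dist3_lt in Hd.
  specialize (V_le_sq_dist3 y1 y2 y3).
  apply Rmult_lt_compat_l with (r := C2) in Hd; [|exact HC2].
  replace (C2 * (rho / C1 / C2)) with (rho / C1) in Hd by (field; lra). lra.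
Qed.

Lemma V_solution_le_initial (T : Rbar) (x1 x2 x3 : R -> R) :
  ode_solution F1 F2 F3 T x1 x2 x3 -> V (x1 0) (x2 0) (x3 0) < r / C1 ->
  forall t, 0 <= t -> Rbar_lt t T -> V (x1 t) (x2 t) (x3 t) <= V (x1 0) (x2 0) (x3 0).
Proof.
  intros [Hode [Hrc1 [Hrc2 Hrc3]]] HV0.
  apply (nonincreasing_below_level (fun s => V (x1 s) (x2 s) (x3 s))
    (fun s => DV (x1 s) (x2 s) (x3 s) (F1 (x1 s) (x2 s) (x3 s)) (F2 (x1 s) (x2 s) (x3 s))
                 (F3 (x1 s) (x2 s) (x3 s))) T (r / C1)); [| |exact HV0|].
  - intros s Hs HsT. destruct (Hode s Hs HsT) as [D1 [D2 D3]]. now apply V_derive.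
  - now apply V_right_continuous.
  - intros s _ _ HVs. simpl in HVs.
    generalize (V_decreasing _ _ _ (sq_dist3_lt_of_V_lt _ _ _ _ HVs))
      (V_nonneg (x1 s) (x2 s) (x3 s)).
    nra.
Qed.

Lemma lyapunov_stable : forall eps, 0 < eps -> exists delta, 0 < delta /\
  forall (T : Rbar) x1 x2 x3, ode_solution F1 F2 F3 T x1 x2 x3 ->
    dist3 (x1 0) (x2 0) (x3 0) e1 e2 e3 < delta ->
    forall t, 0 <= t -> Rbar_lt t T -> dist3 (x1 t) (x2 t) (x3 t) e1 e2 e3 < eps.
Proof.
  intros eps Heps.
  set (rho := Rmin (eps ^ 2) r).
  assert (Hrho : 0 < rho) by (apply Rmin_pos; nra).
  exists (sqrt (rho / C1 / C2)). split.
  { apply sqrt_lt_R0. repeat apply Rdiv_lt_0_compat; lra. }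
  intros T x1 x2 x3 Hsol Hd t Ht HtT.
  assert (HV0 := V_lt_of_dist3_lt _ _ _ _ Hd).
  assert (rho / C1 <= r / C1)
    by (apply Rmult_le_compat_r; [left; apply Rinv_0_lt_compat, HC1 | apply Rmin_r]).
  assert (HVt := V_solution_le_initial T x1 x2 x3 Hsol ltac:(lra) t Ht HtT).
  apply dist3_lt_of_sq_dist3_lt; [exact Heps|].
  apply Rlt_le_trans with rho; [|apply Rmin_l].
  apply sq_dist3_lt_of_V_lt. lra.
Qed.

Lemma lyapunov_attractive : exists delta0, 0 < delta0 /\
  forall x1 x2 x3, ode_solution F1 F2 F3 p_infty x1 x2 x3 ->
    dist3 (x1 0) (x2 0) (x3 0) e1 e2 e3 < delta0 ->
    is_lim x1 p_infty e1 /\ is_lim x2 p_infty e2 /\ is_lim x3 p_infty e3.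
Proof.
  exists (sqrt (r / C1 / C2)). split.
  { apply sqrt_lt_R0. repeat apply Rdiv_lt_0_compat; lra. }
  intros x1 x2 x3 Hsol Hd.
  assert (HV0 := V_lt_of_dist3_lt _ _ _ _ Hd).
  assert (Hnear : forall t, 0 <= t -> sq_dist3 (x1 t) (x2 t) (x3 t) e1 e2 e3 < r).
  { intros t Ht. apply sq_dist3_lt_of_V_lt.
    generalize (V_solution_le_initial p_infty x1 x2 x3 Hsol HV0 t Ht I). lra. }
  destruct Hsol as [Hode _].
  apply (is_lim_of_sq_dist3_decay _ _ _ _ _ _ (C1 * V (x1 1) (x2 1) (x3 1)) c Hc).
  intros t Ht.
  assert (Hdecay : V (x1 t) (x2 t) (x3 t) * (1 + c * (t - 1)) <= V (x1 1) (x2 1) (x3 1)).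
  { apply (linear_decay (fun s => V (x1 s) (x2 s) (x3 s))
      (fun s => DV (x1 s) (x2 s) (x3 s) (F1 (x1 s) (x2 s) (x3 s)) (F2 (x1 s) (x2 s) (x3 s))
                   (F3 (x1 s) (x2 s) (x3 s))) c 1 Hc); [| | |exact Ht].
    - intros s Hs. destruct (Hode s ltac:(lra) I) as [D1 [D2 D3]]. now apply V_derive.
    - intros s Hs. apply V_decreasing, Hnear. lra.
    - intros s _. apply V_nonneg. }
  assert (0 <= c * (t - 1)) by (apply Rmult_le_pos; lra).
  generalize (sq_dist3_le_V (x1 t) (x2 t) (x3 t)) (sq_dist3_nonneg (x1 t) (x2 t) (x3 t) e1 e2 e3).
  intros Hle Hnn.
  apply Rle_trans with (C1 * V (x1 t) (x2 t) (x3 t) * (1 + c * (t - 1))).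
  - apply Rmult_le_compat_r; lra.
  - rewrite Rmult_assoc. apply Rmult_le_compat_l; lra.
Qed.

Theorem lyapunov_asymptotically_stable : locally_asymptotically_stable F1 F2 F3 e1 e2 e3.
Proof. split; [exact lyapunov_stable | exact lyapunov_attractive]. Qed.

End LyapunovFunction.

Definition qform (a11 a12 a13 a22 a23 a33 x y z : R) : R :=
  a11 * x * x + 2 * a12 * x * y + 2 * a13 * x * z + a22 * y * y + 2 * a23 * y * z + a33 * z * z.

Definition det3 (a11 a12 a13 a22 a23 a33 : R) : R :=
  a11 * (a22 * a33 - a23 ^ 2) - a12 * (a12 * a33 - a23 * a13) + a13 * (a12 * a23 - a22 * a13).

Definition qform_deriv (a11 a12 a13 a22 a23 a33 x y z dx dy dz : R) : R :=
  2 * ((a11 * x + a12 * y + a13 * z) * dx + (a12 * x + a22 * y + a23 * z) * dy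
       + (a13 * x + a23 * y + a33 * z) * dz).

Lemma filterlim_qform {F : (R -> Prop) -> Prop} {FF : Filter F} a11 a12 a13 a22 a23 a33
  (u v w : R -> R) (lu lv lw : R) :
  filterlim u F (locally lu) -> filterlim v F (locally lv) -> filterlim w F (locally lw) ->
  filterlim (fun t => qform a11 a12 a13 a22 a23 a33 (u t) (v t) (w t)) F
    (locally (qform a11 a12 a13 a22 a23 a33 lu lv lw)).
Proof.
  intros Hu Hv Hw. unfold qform. filterlim_arith.
Qed.

Lemma sq_sum_le2 u v : (u + v) ^ 2 <= 2 * u ^ 2 + 2 * v ^ 2.
Proof. generalize (pow2_ge_0 (u - v)). nra. Qed.

Lemma sq_sum_le3 u v w : (u + v + w) ^ 2 <= 3 * (u ^ 2 + v ^ 2 + w ^ 2).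
Proof. generalize (pow2_ge_0 (u - v)) (pow2_ge_0 (v - w)) (pow2_ge_0 (u - w)). nra. Qed.

Lemma mul_le_abs_mul p u S : 0 <= u <= S -> p * u <= Rabs p * S.
Proof.
  intros Hu. apply Rle_trans with (Rabs p * u).
  - apply Rmult_le_compat_r; [lra | apply Rle_abs].
  - apply Rmult_le_compat_l; [apply Rabs_pos | lra].
Qed.

Lemma cross_term_le p u v : 2 * p * u * v <= Rabs p * (u ^ 2 + v ^ 2).
Proof.
  destruct (Rle_or_lt 0 p) as [H|H].
  - rewrite Rabs_right by lra. generalize (pow2_ge_0 (u - v)). nra.
  - rewrite Rabs_left by lra. generalize (pow2_ge_0 (u + v)). nra.
Qed.

Lemma qform_le_sq_norm a11 a12 a13 a22 a23 a33 : exists K, 0 < K /\ forall x y z,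
  qform a11 a12 a13 a22 a23 a33 x y z <= K * (x ^ 2 + y ^ 2 + z ^ 2).
Proof.
  exists (1 + Rabs a11 + Rabs a22 + Rabs a33 + Rabs a12 + Rabs a13 + Rabs a23).
  split.
  { generalize (Rabs_pos a11) (Rabs_pos a22) (Rabs_pos a33) (Rabs_pos a12) (Rabs_pos a13)
      (Rabs_pos a23). lra. }
  intros x y z. set (S := x ^ 2 + y ^ 2 + z ^ 2).
  generalize (pow2_ge_0 x) (pow2_ge_0 y) (pow2_ge_0 z). intros Hx Hy Hz.
  assert (Hdiag : forall p u, u ^ 2 <= S -> p * u * u <= Rabs p * S).
  { intros p u Hu. replace (p * u * u) with (p * u ^ 2) by ring.
    apply mul_le_abs_mul. generalize (pow2_ge_0 u). lra. }
  assert (Hcross : forall p u v, u ^ 2 + v ^ 2 <= S -> 2 * p * u * v <= Rabs p * S).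
  { intros p u v Huv. eapply Rle_trans; [apply cross_term_le|].
    apply Rmult_le_compat_l; [apply Rabs_pos | exact Huv]. }
  generalize (Hdiag a11 x ltac:(unfold S; lra)) (Hdiag a22 y ltac:(unfold S; lra))
    (Hdiag a33 z ltac:(unfold S; lra)) (Hcross a12 x y ltac:(unfold S; lra))
    (Hcross a13 x z ltac:(unfold S; lra)) (Hcross a23 y z ltac:(unfold S; lra)).
  assert (0 <= S) by (unfold S; lra).
  unfold qform. lra.
Qed.

Lemma le_div_of_mul_le p u v : 0 < p -> p * u <= v -> u <= v / p.
Proof.
  intros Hp H. apply Rmult_le_reg_l with p; [exact Hp|].
  replace (p * (v / p)) with v by (field; lra). exact H.
Qed.

(* Sylvester's criterion: completing squares,
   [m2 * (a11 * Q) = m2 * L^2 + w^2 + a11 * D * z^2] with [L = a11 x + a12 y + a13 z]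
   and [w = m2 y + n z], so [z], then [y], then [x] are controlled by [Q]. *)
Lemma sq_norm_le_qform a11 a12 a13 a22 a23 a33 :
  0 < a11 -> 0 < a11 * a22 - a12 ^ 2 ->
  0 < det3 a11 a12 a13 a22 a23 a33 ->
  exists K, 0 < K /\ forall x y z,
    x ^ 2 + y ^ 2 + z ^ 2 <= K * qform a11 a12 a13 a22 a23 a33 x y z.
Proof.
  set (m2 := a11 * a22 - a12 ^ 2).
  set (D := det3 a11 a12 a13 a22 a23 a33).
  set (n := a11 * a23 - a12 * a13).
  intros H1 H2 H3.
  set (Kz := m2 / D).
  set (Ky := (2 * m2 * a11 + 2 * n ^ 2 * Kz) / m2 ^ 2).
  set (Kx := 3 * (a11 + a12 ^ 2 * Ky + a13 ^ 2 * Kz) / a11 ^ 2).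
  assert (HKz : 0 < Kz) by (unfold Kz; apply Rdiv_lt_0_compat; assumption).
  assert (HKy : 0 < Ky).
  { unfold Ky. apply Rdiv_lt_0_compat; [|apply pow_lt; exact H2].
    generalize (pow2_ge_0 n). nra. }
  assert (HKx : 0 < Kx).
  { unfold Kx. apply Rdiv_lt_0_compat; [|apply pow_lt; exact H1].
    generalize (pow2_ge_0 a12) (pow2_ge_0 a13). nra. }
  exists (Kx + Ky + Kz). split; [lra|]. intros x y z.
  set (Q := qform a11 a12 a13 a22 a23 a33 x y z).
  set (L := a11 * x + a12 * y + a13 * z).
  set (w := m2 * y + n * z).
  assert (Hsq : m2 * (a11 * Q) = m2 * L ^ 2 + w ^ 2 + a11 * D * z ^ 2)
    by (unfold Q, qform, L, w, m2, n, D, det3; ring).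
  generalize (pow2_ge_0 L) (pow2_ge_0 w) (pow2_ge_0 z). intros HL Hw Hz.
  assert (0 <= m2 * L ^ 2) by (apply Rmult_le_pos; lra).
  assert (0 <= a11 * D * z ^ 2) by (apply Rmult_le_pos; [apply Rmult_le_pos|]; lra).
  assert (Bz : z ^ 2 <= Kz * Q).
  { unfold Kz. replace (m2 / D * Q) with (m2 * a11 * Q / (a11 * D)) by (field; lra).
    apply le_div_of_mul_le; [apply Rmult_lt_0_compat; lra | lra]. }
  assert (BL : L ^ 2 <= a11 * Q) by (apply Rmult_le_reg_l with m2; lra).
  assert (By : y ^ 2 <= Ky * Q).
  { assert (m2 ^ 2 * y ^ 2 <= 2 * m2 * a11 * Q + 2 * n ^ 2 * (Kz * Q)).
    { replace (m2 ^ 2 * y ^ 2) with ((w + - n * z) ^ 2) by (unfold w; ring).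
      eapply Rle_trans; [apply sq_sum_le2|].
      assert (n ^ 2 * z ^ 2 <= n ^ 2 * (Kz * Q))
        by (apply Rmult_le_compat_l; [apply pow2_ge_0 | lra]).
      nra. }
    unfold Ky. replace ((2 * m2 * a11 + 2 * n ^ 2 * Kz) / m2 ^ 2 * Q)
      with ((2 * m2 * a11 * Q + 2 * n ^ 2 * (Kz * Q)) / m2 ^ 2) by (field; lra).
    apply le_div_of_mul_le; [apply pow_lt; lra | assumption]. }
  assert (Bx : x ^ 2 <= Kx * Q).
  { assert (a11 ^ 2 * x ^ 2 <= 3 * (a11 * Q + a12 ^ 2 * (Ky * Q) + a13 ^ 2 * (Kz * Q))).
    { replace (a11 ^ 2 * x ^ 2) with ((L + - a12 * y + - a13 * z) ^ 2) by (unfold L; ring).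
      eapply Rle_trans; [apply sq_sum_le3|].
      assert (a12 ^ 2 * y ^ 2 <= a12 ^ 2 * (Ky * Q))
        by (apply Rmult_le_compat_l; [apply pow2_ge_0 | lra]).
      assert (a13 ^ 2 * z ^ 2 <= a13 ^ 2 * (Kz * Q))
        by (apply Rmult_le_compat_l; [apply pow2_ge_0 | lra]).
      nra. }
    unfold Kx. replace (3 * (a11 + a12 ^ 2 * Ky + a13 ^ 2 * Kz) / a11 ^ 2 * Q)
      with (3 * (a11 * Q + a12 ^ 2 * (Ky * Q) + a13 ^ 2 * (Kz * Q)) / a11 ^ 2) by (field; lra).
    apply le_div_of_mul_le; [apply pow_lt; lra | assumption]. }
  lra.
Qed.

Lemma row_abs_le p q r x y z B : Rabs p <= B -> Rabs q <= B -> Rabs r <= B ->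
  Rabs (p * x + q * y + r * z) <= B * (Rabs x + Rabs y + Rabs z).
Proof.
  intros Hp Hq Hr.
  eapply Rle_trans; [apply Rabs_triang|].
  eapply Rle_trans; [apply Rplus_le_compat_r, Rabs_triang|].
  rewrite !Rabs_mult.
  generalize (Rabs_pos x) (Rabs_pos y) (Rabs_pos z). intros.
  assert (Rabs p * Rabs x <= B * Rabs x) by (apply Rmult_le_compat_r; assumption).
  assert (Rabs q * Rabs y <= B * Rabs y) by (apply Rmult_le_compat_r; assumption).
  assert (Rabs r * Rabs z <= B * Rabs z) by (apply Rmult_le_compat_r; assumption).
  lra.
Qed.

Lemma qform_deriv_le_of_small a11 a12 a13 a22 a23 a33 B kappa x y z r1 r2 :
  Rabs a11 <= B -> Rabs a12 <= B -> Rabs a13 <= B -> Rabs a22 <= B -> Rabs a23 <= B ->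
  0 <= kappa -> Rabs r1 <= kappa * Rabs z -> Rabs r2 <= kappa * Rabs z ->
  qform_deriv a11 a12 a13 a22 a23 a33 x y z r1 r2 0
    <= 8 * B * kappa * (x ^ 2 + y ^ 2 + z ^ 2).
Proof.
  intros H11 H12 H13 H22 H23 Hk Hr1 Hr2.
  set (S := Rabs x + Rabs y + Rabs z).
  assert (HB : 0 <= B) by (generalize (Rabs_pos a11); lra).
  assert (HS : 0 <= S) by (unfold S; generalize (Rabs_pos x) (Rabs_pos y) (Rabs_pos z); lra).
  assert (Hrow : forall p q r rr, Rabs (p * x + q * y + r * z) <= B * S ->
             Rabs rr <= kappa * Rabs z -> (p * x + q * y + r * z) * rr <= B * kappa * (S * Rabs z)).
  { intros p q r rr Hpqr Hrr. eapply Rle_trans; [apply Rle_abs|]. rewrite Rabs_mult.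
    replace (B * kappa * (S * Rabs z)) with ((B * S) * (kappa * Rabs z)) by ring.
    apply Rmult_le_compat; [apply Rabs_pos | apply Rabs_pos | exact Hpqr | exact Hrr]. }
  assert (Hprod : S * Rabs z <= 2 * (x ^ 2 + y ^ 2 + z ^ 2)).
  { unfold S. rewrite <- (pow2_abs x), <- (pow2_abs y), <- (pow2_abs z).
    generalize (Rabs_pos x) (Rabs_pos y) (Rabs_pos z)
      (pow2_ge_0 (Rabs x - Rabs z)) (pow2_ge_0 (Rabs y - Rabs z)). nra. }
  assert (0 <= B * kappa) by (apply Rmult_le_pos; assumption).
  assert (B * kappa * (S * Rabs z) <= B * kappa * (2 * (x ^ 2 + y ^ 2 + z ^ 2)))
    by (apply Rmult_le_compat_l; assumption).
  assert (E1 := Hrow _ _ _ r1 (row_abs_le a11 a12 a13 x y z B H11 H12 H13) Hr1).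
  assert (E2 := Hrow _ _ _ r2 (row_abs_le a12 a22 a23 x y z B H12 H22 H23) Hr2).
  unfold qform_deriv. lra.
Qed.

Lemma sq_norm_le_shear m A x y z : 0 < A ->
  x ^ 2 + y ^ 2 + z ^ 2 <= (1 + (2 + 2 * m ^ 2) / A ^ 2) * (x ^ 2 + (m * x + A * y) ^ 2 + z ^ 2).
Proof.
  intros HA. set (s := m * x + A * y).
  generalize (pow2_ge_0 x) (pow2_ge_0 s) (pow2_ge_0 z) (pow2_ge_0 m). intros Hx Hs Hz Hm.
  assert (A ^ 2 * y ^ 2 <= 2 * s ^ 2 + 2 * m ^ 2 * x ^ 2).
  { replace (A ^ 2 * y ^ 2) with ((s + - m * x) ^ 2) by (unfold s; ring).
    eapply Rle_trans; [apply sq_sum_le2 | lra]. }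
  assert (y ^ 2 <= (2 + 2 * m ^ 2) / A ^ 2 * (x ^ 2 + s ^ 2 + z ^ 2)).
  { replace ((2 + 2 * m ^ 2) / A ^ 2 * (x ^ 2 + s ^ 2 + z ^ 2))
      with ((2 + 2 * m ^ 2) * (x ^ 2 + s ^ 2 + z ^ 2) / A ^ 2) by (field; lra).
    apply le_div_of_mul_le; [apply pow_lt; exact HA|].
    assert (m ^ 2 * x ^ 2 <= m ^ 2 * (x ^ 2 + s ^ 2 + z ^ 2)) by (apply Rmult_le_compat_l; lra).
    lra. }
  lra.
Qed.

Lemma shear_le_sq_norm m A x y z :
  x ^ 2 + (m * x + A * y) ^ 2 + z ^ 2 <= (1 + 2 * m ^ 2 + 2 * A ^ 2) * (x ^ 2 + y ^ 2 + z ^ 2).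
Proof.
  generalize (sq_sum_le2 (m * x) (A * y)) (pow2_ge_0 x) (pow2_ge_0 y) (pow2_ge_0 z)
    (pow2_ge_0 m) (pow2_ge_0 A). intros.
  assert (m ^ 2 * x ^ 2 <= m ^ 2 * (x ^ 2 + y ^ 2 + z ^ 2)) by (apply Rmult_le_compat_l; lra).
  assert (A ^ 2 * y ^ 2 <= A ^ 2 * (x ^ 2 + y ^ 2 + z ^ 2)) by (apply Rmult_le_compat_l; lra).
  replace ((m * x) ^ 2) with (m ^ 2 * x ^ 2) in * by ring.
  replace ((A * y) ^ 2) with (A ^ 2 * y ^ 2) in * by ring.
  lra.
Qed.

(* The linearisation studied below is [x' = -g x + s - a z], [s' = -b z], [z' = k x - k z];
   [lyap_form] is a quadratic Lyapunov function for it, found by solving the Lyapunov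
   equation with a diagonal right-hand side (see [lyap_form_deriv_linear]). *)
Definition lyap11 (g b a k : R) : R := 4 * b ^ 2 * k ^ 2 * (g + k + a).
Definition lyap12 (g b a k : R) : R := - (2 * g * b * k ^ 2 * (g + k + a)).
Definition lyap13 (g b a k : R) : R := 2 * g * b ^ 2 * k * (g + k + 2 * a).
Definition lyap22 (g b a k : R) : R :=
  2 * k ^ 2 * (g + k + a) * (g * a + g ^ 2) + 4 * b * k ^ 2 * (g + k + a)
  + 2 * b * k * g * (g + k + 2 * a).
Definition lyap23 (g b a k : R) : R := - (2 * b * k * (g + k + a) * (2 * b + g ^ 2)).
Definition lyap33 (g b a k : R) : R :=
  2 * b ^ 2 * (k * (g + k + a) * (2 * a - g) + g * (g + k + 2 * a) * (g + k)).

Definition lyap_form (g b a k : R) : R -> R -> R -> R :=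
  qform (lyap11 g b a k) (lyap12 g b a k) (lyap13 g b a k)
        (lyap22 g b a k) (lyap23 g b a k) (lyap33 g b a k).

Definition lyap_form_deriv (g b a k : R) : R -> R -> R -> R -> R -> R -> R :=
  qform_deriv (lyap11 g b a k) (lyap12 g b a k) (lyap13 g b a k)
              (lyap22 g b a k) (lyap23 g b a k) (lyap33 g b a k).

Lemma lyap_form_deriv_linear g b a k x s z :
  lyap_form_deriv g b a k x s z (- g * x + s - a * z) (- b * z) (k * x - k * z)
  = - (4 * b ^ 2 * k ^ 2 * g * (g + k) * x ^ 2 + 4 * b * k ^ 2 * g * (g + k + a) * s ^ 2
       + 8 * b ^ 2 * k * (g + k + a) * (a * (g + k) - b) * z ^ 2).
Proof.
  unfold lyap_form_deriv, qform_deriv, lyap11, lyap12, lyap13, lyap22, lyap23, lyap33. ring.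
Qed.

Ltac nonneg_poly := match goal with
  | |- 0 <= _ + _ => apply Rplus_le_le_0_compat; nonneg_poly
  | |- 0 <= _ * _ => apply Rmult_le_pos; nonneg_poly
  | |- 0 <= _ ^ _ => apply pow_le; nonneg_poly
  | |- _ => lra
  end.

Ltac positive_poly := match goal with
  | |- 0 < _ + _ => first [ apply Rplus_le_lt_0_compat; [nonneg_poly | positive_poly]
                          | apply Rplus_lt_le_0_compat; [positive_poly | nonneg_poly] ]
  | |- 0 < _ * _ => apply Rmult_lt_0_compat; positive_poly
  | |- 0 < _ ^ _ => apply pow_lt; positive_poly
  | |- _ => lra
  end.

(* Only the determinant needs [b = 2 mu a] and [g = gamma + mu] with [mu <= gamma]: in the
   variables [mu, gamma - mu, a, k] it is a polynomial with positive coefficients. *)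
Lemma sq_norm_le_lyap_form gamma mu a k : 0 < mu -> mu <= gamma -> 0 < a -> 0 < k ->
  exists K, 0 < K /\ forall x s z,
    x ^ 2 + s ^ 2 + z ^ 2 <= K * lyap_form (gamma + mu) (2 * mu * a) a k x s z.
Proof.
  intros Hmu Hgm Ha Hk.
  set (d := gamma - mu).
  assert (Hd : 0 <= d) by (unfold d; lra).
  replace (gamma + mu) with (2 * mu + d) by (unfold d; ring). clearbody d.
  set (g := 2 * mu + d). set (b := 2 * mu * a).
  assert (Hg : 0 < g) by (unfold g; lra).
  assert (Hb : 0 < b) by (unfold b; positive_poly).
  apply sq_norm_le_qform.
  - unfold lyap11. positive_poly.
  - replace (lyap11 g b a k * lyap22 g b a k - lyap12 g b a k ^ 2)
      with (4 * b ^ 2 * k ^ 3 * (g + k + a) * (k * (g + k + a) * g * (g + 2 * a)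
            + 4 * b * k * (g + k + a) + 2 * b * g * (g + k + 2 * a)))
      by (unfold lyap11, lyap12, lyap22; ring).
    positive_poly.
  - replace (det3 (lyap11 g b a k) (lyap12 g b a k) (lyap13 g b a k)
                  (lyap22 g b a k) (lyap23 g b a k) (lyap33 g b a k))
      with (128 * mu ^ 4 * a ^ 5 * k ^ 3 * (
    4 * d * a * k ^ 5 + 12 * d * a ^ 2 * k ^ 4 + 12 * d * a ^ 3 * k ^ 3 +
    4 * d * a ^ 4 * k ^ 2 + 2 * d ^ 2 * k ^ 5 + 20 * d ^ 2 * a * k ^ 4 +
    34 * d ^ 2 * a ^ 2 * k ^ 3 + 16 * d ^ 2 * a ^ 3 * k ^ 2 + 8 * d ^ 3 * k ^ 4 +
    33 * d ^ 3 * a * k ^ 3 + 25 * d ^ 3 * a ^ 2 * k ^ 2 + 12 * d ^ 4 * k ^ 3 +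
    21 * d ^ 4 * a * k ^ 2 + 2 * d ^ 4 * a ^ 2 * k + 8 * d ^ 5 * k ^ 2 + 4 * d ^ 5 * a * k +
    2 * d ^ 6 * k + 24 * mu * a * k ^ 5 + 72 * mu * a ^ 2 * k ^ 4 + 72 * mu * a ^ 3 * k ^ 3 +
    24 * mu * a ^ 4 * k ^ 2 + 8 * mu * d * k ^ 5 + 144 * mu * d * a * k ^ 4 +
    280 * mu * d * a ^ 2 * k ^ 3 + 160 * mu * d * a ^ 3 * k ^ 2 + 16 * mu * d * a ^ 4 * k +
    44 * mu * d ^ 2 * k ^ 4 + 286 * mu * d ^ 2 * a * k ^ 3 + 290 * mu * d ^ 2 * a ^ 2 * k ^ 2 +
    48 * mu * d ^ 2 * a ^ 3 * k + 86 * mu * d ^ 3 * k ^ 3 + 224 * mu * d ^ 3 * a * k ^ 2 +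
    68 * mu * d ^ 3 * a ^ 2 * k + 74 * mu * d ^ 4 * k ^ 2 + 64 * mu * d ^ 4 * a * k +
    8 * mu * d ^ 4 * a ^ 2 + 26 * mu * d ^ 5 * k + 8 * mu * d ^ 5 * a + 2 * mu * d ^ 6 +
    8 * mu ^ 2 * k ^ 5 + 176 * mu ^ 2 * a * k ^ 4 + 328 * mu ^ 2 * a ^ 2 * k ^ 3 +
    160 * mu ^ 2 * a ^ 3 * k ^ 2 + 80 * mu ^ 2 * d * k ^ 4 + 652 * mu ^ 2 * d * a * k ^ 3 +
    668 * mu ^ 2 * d * a ^ 2 * k ^ 2 + 96 * mu ^ 2 * d * a ^ 3 * k +
    228 * mu ^ 2 * d ^ 2 * k ^ 3 + 744 * mu ^ 2 * d ^ 2 * a * k ^ 2 +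
    264 * mu ^ 2 * d ^ 2 * a ^ 2 * k + 272 * mu ^ 2 * d ^ 3 * k ^ 2 +
    320 * mu ^ 2 * d ^ 3 * a * k + 64 * mu ^ 2 * d ^ 3 * a ^ 2 + 140 * mu ^ 2 * d ^ 4 * k +
    80 * mu ^ 2 * d ^ 4 * a + 24 * mu ^ 2 * d ^ 5 + 48 * mu ^ 3 * k ^ 4 +
    424 * mu ^ 3 * a * k ^ 3 + 376 * mu ^ 3 * a ^ 2 * k ^ 2 + 264 * mu ^ 3 * d * k ^ 3 +
    960 * mu ^ 3 * d * a * k ^ 2 + 304 * mu ^ 3 * d * a ^ 2 * k + 496 * mu ^ 3 * d ^ 2 * k ^ 2 +
    704 * mu ^ 3 * d ^ 2 * a * k + 192 * mu ^ 3 * d ^ 2 * a ^ 2 + 400 * mu ^ 3 * d ^ 3 * k +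
    320 * mu ^ 3 * d ^ 3 * a + 120 * mu ^ 3 * d ^ 4 + 112 * mu ^ 4 * k ^ 3 +
    400 * mu ^ 4 * a * k ^ 2 + 64 * mu ^ 4 * a ^ 2 * k + 448 * mu ^ 4 * d * k ^ 2 +
    704 * mu ^ 4 * d * a * k + 256 * mu ^ 4 * d * a ^ 2 + 640 * mu ^ 4 * d ^ 2 * k +
    640 * mu ^ 4 * d ^ 2 * a + 320 * mu ^ 4 * d ^ 3 + 160 * mu ^ 5 * k ^ 2 + 256 * mu ^ 5 * a * k +
    128 * mu ^ 5 * a ^ 2 + 544 * mu ^ 5 * d * k + 640 * mu ^ 5 * d * a + 480 * mu ^ 5 * d ^ 2 +
    192 * mu ^ 6 * k + 256 * mu ^ 6 * a + 384 * mu ^ 6 * d + 128 * mu ^ 7))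
      by (unfold det3, lyap11, lyap12, lyap13, lyap22, lyap23, lyap33, g, b; ring).
    positive_poly.
Qed.

Lemma is_derive_remainder_le (f : R -> R) (x fp eps : R) : is_derive f x fp -> 0 < eps ->
  exists del, 0 < del /\ forall z, Rabs z < del -> Rabs (f (x + z) - f x - fp * z) <= eps * Rabs z.
Proof.
  intros Hf Heps. apply is_derive_Reals in Hf.
  destruct (Hf eps Heps) as [del Hdel]. exists del. split; [apply cond_pos|].
  intros z Hz. destruct (Req_dec z 0) as [-> | Hz0].
  - replace (f (x + 0) - f x - fp * 0) with 0 by (rewrite Rplus_0_r; ring).
    rewrite Rabs_R0. lra.
  - replace (f (x + z) - f x - fp * z) with (((f (x + z) - f x) / z - fp) * z)
      by (field; exact Hz0).
    rewrite Rabs_mult. apply Rmult_le_compat_r; [apply Rabs_pos | left; exact (Hdel z Hz0 Hz)].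
Qed.

(* [eta * Is + phi * dI] is the nonlinear part of [f J * (Is + dI) - f Js * Is] when
   [phi = f J - f Js = eta - dd (J - Js)]. *)
Lemma product_remainder_le (eta phi Is dI dd th Z : R) :
  0 <= Is -> 0 <= dd -> 0 < th <= 1 -> Rabs eta <= th * Rabs Z -> phi = eta - dd * Z ->
  Rabs dI <= th -> Rabs (eta * Is + phi * dI) <= th * Rabs Z * (Is + 1 + dd).
Proof.
  intros HIs Hdd Hth Heta Hphi HdI.
  assert (HZ := Rabs_pos Z).
  assert (Hphi_le : Rabs phi <= (th + dd) * Rabs Z).
  { rewrite Hphi. eapply Rle_trans; [apply Rabs_triang|].
    rewrite Rabs_Ropp, Rabs_mult, (Rabs_right dd) by lra. lra. }
  eapply Rle_trans; [apply Rabs_triang|]. rewrite !Rabs_mult, (Rabs_right Is) by lra.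
  assert (Rabs eta * Is <= th * Rabs Z * Is) by (apply Rmult_le_compat_r; assumption).
  assert (Rabs phi * Rabs dI <= (th + dd) * Rabs Z * th)
    by (apply Rmult_le_compat; [apply Rabs_pos | apply Rabs_pos | assumption | assumption]).
  assert (0 <= (dd + th) * Rabs Z * (1 - th)) by nonneg_poly.
  nra.
Qed.

Lemma equilibrium_product (c1 c2 gamma mu IH IM : R) : 0 < IH -> 0 < IM ->
  c1 * IM = gamma * IH -> c2 * IH = mu * IM -> c1 * c2 = gamma * mu.
Proof.
  intros HIH HIM E1 E2. apply Rmult_eq_reg_r with (IH * IM); [|nra].
  transitivity ((c1 * IM) * (c2 * IH)); [ring|]. rewrite E1, E2. ring.
Qed.

Section HostVectorModel.

Variables (f : R -> R) (K1 K2 gamma mu k IHs IMs Js dd : R).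
Hypotheses (HK1 : 0 < K1) (HK2 : 0 < K2) (Hmu : 0 < mu) (Hgm : mu <= gamma) (Hk : 0 < k).
Hypotheses (HIHs : 0 < IHs) (Hfs : 0 < f Js) (Hdd : 0 < dd).
Hypothesis f_derive : is_derive f Js (- dd).
Hypothesis equilibrium_IH : K1 * f Js * IMs = gamma * IHs.
Hypothesis equilibrium_IM : K2 * f Js * IHs = mu * IMs.
Hypothesis equilibrium_J : Js = IHs.

Let F1 (y1 y2 y3 : R) : R := K1 * f y3 * y2 - gamma * y1.
Let F2 (y1 y2 y3 : R) : R := K2 * f y3 * y1 - mu * y2.
Let F3 (y1 y2 y3 : R) : R := k * y1 - k * y3.

Lemma IMs_pos : 0 < IMs.
Proof.
  apply Rmult_lt_reg_l with mu; [exact Hmu|]. rewrite <- equilibrium_IM, Rmult_0_r.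
  repeat apply Rmult_lt_0_compat; assumption.
Qed.

Let A : R := K1 * f Js.
Let a : R := K1 * dd * IMs.

Lemma A_pos : 0 < A.
Proof. unfold A. positive_poly. Qed.

Lemma a_pos : 0 < a.
Proof. generalize IMs_pos. intro. unfold a. positive_poly. Qed.

Let g : R := gamma + mu.
Let b : R := 2 * mu * a.

Let V (y1 y2 y3 : R) : R :=
  lyap_form g b a k (y1 - IHs) (mu * (y1 - IHs) + A * (y2 - IMs)) (y3 - Js).
Let DV (y1 y2 y3 v1 v2 v3 : R) : R :=
  lyap_form_deriv g b a k (y1 - IHs) (mu * (y1 - IHs) + A * (y2 - IMs))
    (y3 - Js) v1 (mu * v1 + A * v2) v3.

Let phi (y3 : R) : R := f y3 - f Js.
Let eta (y3 : R) : R := phi y3 + dd * (y3 - Js).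
Let R1 (y2 y3 : R) : R := K1 * (eta y3 * IMs + phi y3 * (y2 - IMs)).
Let R2 (y1 y3 : R) : R := K2 * (eta y3 * IHs + phi y3 * (y1 - IHs)).

Lemma rate_x_linearised y1 y2 y3 :
  F1 y1 y2 y3 = - (gamma + mu) * (y1 - IHs) + (mu * (y1 - IHs) + A * (y2 - IMs))
                - a * (y3 - Js) + R1 y2 y3.
Proof.
  apply Rminus_diag_uniq. transitivity (K1 * f Js * IMs - gamma * IHs).
  - unfold F1, R1, eta, phi, A, a. ring.
  - rewrite equilibrium_IH. ring.
Qed.

Lemma rate_s_linearised y1 y2 y3 :
  mu * F1 y1 y2 y3 + A * F2 y1 y2 y3
  = - (2 * mu * a) * (y3 - Js) + (mu * R1 y2 y3 + A * R2 y1 y3).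
Proof.
  assert (Hprod : A * (K2 * f Js) = gamma * mu)
    by exact (equilibrium_product _ _ _ _ IHs IMs HIHs IMs_pos equilibrium_IH equilibrium_IM).
  apply Rminus_diag_uniq.
  transitivity (mu * (K1 * f Js * IMs - gamma * IHs) + A * (K2 * f Js * IHs - mu * IMs)
    + (A * (K2 * f Js) - gamma * mu) * (y1 - IHs)
    - dd * K1 * (y3 - Js) * (K2 * f Js * IHs - mu * IMs)).
  - unfold F1, F2, R1, R2, eta, phi, A, a. ring.
  - rewrite equilibrium_IH, equilibrium_IM, Hprod. ring.
Qed.

Lemma rate_z_linearised y1 y2 y3 : F3 y1 y2 y3 = k * (y1 - IHs) - k * (y3 - Js).
Proof. unfold F3. rewrite equilibrium_J. ring. Qed.

Let W1 : R := 4 * b ^ 2 * k ^ 2 * g * (g + k).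
Let W2 : R := 4 * b * k ^ 2 * g * (g + k + a).
Let W3 : R := 8 * b ^ 2 * k * (g + k + a) * (a * (g + k) - b).

Lemma DV_field y1 y2 y3 :
  let x := y1 - IHs in let s := mu * (y1 - IHs) + A * (y2 - IMs) in let z := y3 - Js in
  DV y1 y2 y3 (F1 y1 y2 y3) (F2 y1 y2 y3) (F3 y1 y2 y3)
  = - (W1 * x ^ 2 + W2 * s ^ 2 + W3 * z ^ 2)
    + lyap_form_deriv g b a k x s z (R1 y2 y3) (mu * R1 y2 y3 + A * R2 y1 y3) 0.
Proof.
  intros x s z. unfold DV.
  rewrite rate_s_linearised, rate_x_linearised, rate_z_linearised.
  transitivity (lyap_form_deriv g b a k x s z (- g * x + s - a * z) (- b * z) (k * x - k * z)
    + lyap_form_deriv g b a k x s z (R1 y2 y3) (mu * R1 y2 y3 + A * R2 y1 y3) 0).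
  - unfold lyap_form_deriv, qform_deriv, g, b, x, s, z. ring.
  - rewrite lyap_form_deriv_linear. unfold W1, W2, W3. ring.
Qed.

Let Kr : R := (1 + mu) * K1 * (IMs + 1 + dd) + A * K2 * (IHs + 1 + dd).

Lemma remainders_small th : 0 < th <= 1 -> exists del, 0 < del /\ forall y1 y2 y3,
  Rabs (y1 - IHs) <= th -> Rabs (y2 - IMs) <= th -> Rabs (y3 - Js) < del ->
  Rabs (R1 y2 y3) <= Kr * th * Rabs (y3 - Js) /\
  Rabs (mu * R1 y2 y3 + A * R2 y1 y3) <= Kr * th * Rabs (y3 - Js).
Proof.
  intros Hth.
  destruct (is_derive_remainder_le f Js (- dd) th f_derive ltac:(lra)) as [del [Hdel Hrem]].
  exists del. split; [exact Hdel|]. intros y1 y2 y3 HX HY HZ.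
  assert (Heta : Rabs (eta y3) <= th * Rabs (y3 - Js)).
  { specialize (Hrem (y3 - Js) HZ). replace (Js + (y3 - Js)) with y3 in Hrem by ring.
    unfold eta, phi. replace (f y3 - f Js + dd * (y3 - Js)) with (f y3 - f Js - - dd * (y3 - Js))
      by ring. exact Hrem. }
  assert (Hphi : phi y3 = eta y3 - dd * (y3 - Js)) by (unfold eta; ring).
  generalize IMs_pos A_pos (Rabs_pos (y3 - Js)). intros HIMs HA HZ0.
  assert (T1 := product_remainder_le _ _ IMs (y2 - IMs) dd th (y3 - Js)
                  ltac:(lra) ltac:(lra) Hth Heta Hphi HY).
  assert (T2 := product_remainder_le _ _ IHs (y1 - IHs) dd th (y3 - Js)
                  ltac:(lra) ltac:(lra) Hth Heta Hphi HX).
  set (t1 := th * Rabs (y3 - Js) * (IMs + 1 + dd)) in T1.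
  set (t2 := th * Rabs (y3 - Js) * (IHs + 1 + dd)) in T2.
  assert (HKr : Kr * th * Rabs (y3 - Js) = (1 + mu) * (K1 * t1) + A * (K2 * t2))
    by (unfold Kr, t1, t2; ring).
  assert (B1 : Rabs (R1 y2 y3) <= K1 * t1).
  { unfold R1. rewrite Rabs_mult, (Rabs_right K1) by lra. apply Rmult_le_compat_l; lra. }
  assert (B2 : Rabs (R2 y1 y3) <= K2 * t2).
  { unfold R2. rewrite Rabs_mult, (Rabs_right K2) by lra. apply Rmult_le_compat_l; lra. }
  assert (0 <= K1 * t1) by (unfold t1; nonneg_poly).
  assert (0 <= K2 * t2) by (unfold t2; nonneg_poly).
  assert (mu * Rabs (R1 y2 y3) <= mu * (K1 * t1)) by (apply Rmult_le_compat_l; lra).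
  assert (A * Rabs (R2 y1 y3) <= A * (K2 * t2)) by (apply Rmult_le_compat_l; lra).
  assert (0 <= mu * Rabs (R1 y2 y3)) by (apply Rmult_le_pos; [lra | apply Rabs_pos]).
  assert (0 <= A * Rabs (R2 y1 y3)) by (apply Rmult_le_pos; [lra | apply Rabs_pos]).
  rewrite HKr. split; [lra|].
  eapply Rle_trans; [apply Rabs_triang|].
  rewrite !Rabs_mult, (Rabs_right mu), (Rabs_right A) by lra.
  lra.
Qed.

Let Wmin : R := Rmin W1 (Rmin W2 W3).
Let B : R := 1 + Rabs (lyap11 g b a k) + Rabs (lyap12 g b a k) + Rabs (lyap13 g b a k)
             + Rabs (lyap22 g b a k) + Rabs (lyap23 g b a k).

Lemma Wmin_pos : 0 < Wmin.
Proof.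
  assert (0 < g) by (unfold g; lra).
  assert (0 < b) by (unfold b; generalize a_pos; intro; positive_poly).
  assert (a * (g + k) - b = a * (gamma - mu + k)) by (unfold g, b; ring).
  assert (0 < a * (g + k) - b) by (generalize a_pos; intro; nra).
  generalize a_pos; intro.
  unfold Wmin, W1, W2, W3. repeat apply Rmin_pos; positive_poly.
Qed.

Lemma B_pos : 0 < B.
Proof.
  unfold B. generalize (Rabs_pos (lyap11 g b a k)) (Rabs_pos (lyap12 g b a k))
    (Rabs_pos (lyap13 g b a k)) (Rabs_pos (lyap22 g b a k)) (Rabs_pos (lyap23 g b a k)). lra.
Qed.

Lemma DV_field_le kappa y1 y2 y3 : 0 <= kappa ->
  Rabs (R1 y2 y3) <= kappa * Rabs (y3 - Js) ->
  Rabs (mu * R1 y2 y3 + A * R2 y1 y3) <= kappa * Rabs (y3 - Js) ->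
  let x := y1 - IHs in let s := mu * (y1 - IHs) + A * (y2 - IMs) in let z := y3 - Js in
  DV y1 y2 y3 (F1 y1 y2 y3) (F2 y1 y2 y3) (F3 y1 y2 y3)
  <= - (Wmin - 8 * B * kappa) * (x ^ 2 + s ^ 2 + z ^ 2).
Proof.
  intros Hk0 HR1 HR2 x s z. rewrite DV_field.
  generalize (Rabs_pos (lyap11 g b a k)) (Rabs_pos (lyap12 g b a k))
    (Rabs_pos (lyap13 g b a k)) (Rabs_pos (lyap22 g b a k)) (Rabs_pos (lyap23 g b a k)). intros.
  assert (Hpert := qform_deriv_le_of_small (lyap11 g b a k) (lyap12 g b a k) (lyap13 g b a k)
    (lyap22 g b a k) (lyap23 g b a k) (lyap33 g b a k) B kappa x s z _ _
    ltac:(unfold B; lra) ltac:(unfold B; lra) ltac:(unfold B; lra) ltac:(unfold B; lra)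
    ltac:(unfold B; lra) Hk0 HR1 HR2).
  assert (Wmin <= W2) by (eapply Rle_trans; [apply Rmin_r | apply Rmin_l]).
  assert (Wmin <= W3) by (eapply Rle_trans; [apply Rmin_r | apply Rmin_r]).
  assert (Wmin * x ^ 2 <= W1 * x ^ 2)
    by (apply Rmult_le_compat_r; [apply pow2_ge_0 | apply Rmin_l]).
  assert (Wmin * s ^ 2 <= W2 * s ^ 2) by (apply Rmult_le_compat_r; [apply pow2_ge_0 | assumption]).
  assert (Wmin * z ^ 2 <= W3 * z ^ 2) by (apply Rmult_le_compat_r; [apply pow2_ge_0 | assumption]).
  unfold lyap_form_deriv, x, s, z in *. lra.
Qed.

Lemma V_le_sq_coordinates : exists K, 0 < K /\ forall y1 y2 y3,
  V y1 y2 y3 <= K * ((y1 - IHs) ^ 2 + (mu * (y1 - IHs) + A * (y2 - IMs)) ^ 2 + (y3 - Js) ^ 2).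
Proof.
  destruct (qform_le_sq_norm (lyap11 g b a k) (lyap12 g b a k) (lyap13 g b a k)
    (lyap22 g b a k) (lyap23 g b a k) (lyap33 g b a k)) as [K [HK Hle]].
  exists K. split; [exact HK|]. intros. apply Hle.
Qed.

Lemma V_decreasing : exists c r, 0 < c /\ 0 < r /\ forall y1 y2 y3,
  sq_dist3 y1 y2 y3 IHs IMs Js < r ->
  DV y1 y2 y3 (F1 y1 y2 y3) (F2 y1 y2 y3) (F3 y1 y2 y3) <= - c * V y1 y2 y3.
Proof.
  destruct V_le_sq_coordinates as [Kup [HKup Hup]].
  assert (HKr : 0 < Kr) by (generalize IMs_pos A_pos; intros; unfold Kr; positive_poly).
  assert (HW := Wmin_pos). assert (HB := B_pos).
  set (th := Rmin 1 (Wmin / (16 * B * Kr))).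
  assert (Hth : 0 < th) by (apply Rmin_pos; [lra | apply Rdiv_lt_0_compat; positive_poly]).
  assert (Hth1 : th <= 1) by apply Rmin_l.
  (* a remainder of size [Kr th |z|] costs at most half of the decay rate [Wmin] *)
  assert (Hsmall : 8 * B * (Kr * th) <= Wmin / 2).
  { replace (8 * B * (Kr * th)) with (8 * (B * Kr) * th) by ring.
    apply Rle_trans with (8 * (B * Kr) * (Wmin / (16 * B * Kr))).
    - apply Rmult_le_compat_l; [nonneg_poly | apply Rmin_r].
    - right. field. lra. }
  destruct (remainders_small th (conj Hth Hth1)) as [del [Hdel Hrem]].
  exists (Wmin / (2 * Kup)), (Rmin (th ^ 2) (del ^ 2)).
  split; [apply Rdiv_lt_0_compat; lra|]. split; [apply Rmin_pos; apply pow_lt; lra|].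
  intros y1 y2 y3 Hy.
  destruct (abs_lt_of_sq_dist3_lt _ _ _ _ _ _ th Hth
              ltac:(eapply Rlt_le_trans; [exact Hy | apply Rmin_l])) as [HX [HY _]].
  destruct (abs_lt_of_sq_dist3_lt _ _ _ _ _ _ del Hdel
              ltac:(eapply Rlt_le_trans; [exact Hy | apply Rmin_r])) as [_ [_ HZ]].
  destruct (Hrem y1 y2 y3 ltac:(lra) ltac:(lra) HZ) as [HR1 HR2].
  assert (HDV := DV_field_le (Kr * th) y1 y2 y3 ltac:(nonneg_poly) HR1 HR2). cbv zeta in HDV.
  specialize (Hup y1 y2 y3).
  set (N := (y1 - IHs) ^ 2 + (mu * (y1 - IHs) + A * (y2 - IMs)) ^ 2 + (y3 - Js) ^ 2) in *.
  assert (HN : 0 <= N) by (unfold N; generalize (pow2_ge_0 (y1 - IHs))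
    (pow2_ge_0 (mu * (y1 - IHs) + A * (y2 - IMs))) (pow2_ge_0 (y3 - Js)); lra).
  assert (- (Wmin - 8 * B * (Kr * th)) * N <= - (Wmin / 2) * N) by nra.
  assert (V y1 y2 y3 / Kup <= N).
  { apply Rmult_le_reg_l with Kup; [exact HKup|].
    replace (Kup * (V y1 y2 y3 / Kup)) with (V y1 y2 y3) by (field; lra). exact Hup. }
  replace (- (Wmin / (2 * Kup)) * V y1 y2 y3) with (- (Wmin / 2) * (V y1 y2 y3 / Kup))
    by (field; lra).
  assert (Wmin / 2 * (V y1 y2 y3 / Kup) <= Wmin / 2 * N) by (apply Rmult_le_compat_l; lra).
  lra.
Qed.

Lemma sq_dist3_le_V : exists C, 0 < C /\ forall y1 y2 y3,
  sq_dist3 y1 y2 y3 IHs IMs Js <= C * V y1 y2 y3.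
Proof.
  destruct (sq_norm_le_lyap_form gamma mu a k Hmu Hgm a_pos Hk) as [K [HK Hle]].
  set (c := 1 + (2 + 2 * mu ^ 2) / A ^ 2).
  assert (Hc : 0 < c).
  { unfold c. assert (0 < (2 + 2 * mu ^ 2) / A ^ 2); [|lra].
    apply Rdiv_lt_0_compat; [positive_poly | apply pow_lt, A_pos]. }
  exists (c * K). split; [positive_poly|]. intros y1 y2 y3.
  eapply Rle_trans; [apply (sq_norm_le_shear mu A _ _ _ A_pos)|].
  rewrite Rmult_assoc. apply Rmult_le_compat_l; [lra | apply Hle].
Qed.

Lemma V_le_sq_dist3 : exists C, 0 < C /\ forall y1 y2 y3,
  V y1 y2 y3 <= C * sq_dist3 y1 y2 y3 IHs IMs Js.
Proof.
  destruct V_le_sq_coordinates as [K [HK Hle]].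
  assert (HA := A_pos).
  exists (K * (1 + 2 * mu ^ 2 + 2 * A ^ 2)). split; [positive_poly|]. intros y1 y2 y3.
  eapply Rle_trans; [apply Hle|].
  rewrite Rmult_assoc. apply Rmult_le_compat_l; [lra | apply shear_le_sq_norm].
Qed.

Lemma V_derive (x1 x2 x3 : R -> R) (t v1 v2 v3 : R) :
  is_derive x1 t v1 -> is_derive x2 t v2 -> is_derive x3 t v3 ->
  is_derive (fun s => V (x1 s) (x2 s) (x3 s)) t (DV (x1 t) (x2 t) (x3 t) v1 v2 v3).
Proof.
  intros H1 H2 H3. unfold V, DV, lyap_form, lyap_form_deriv, qform, qform_deriv.
  auto_derive.
  - repeat split; eexists; eassumption.
  - replace (Derive (fun s => x1 s) t) with v1 by (symmetry; now apply is_derive_unique).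
    replace (Derive (fun s => x2 s) t) with v2 by (symmetry; now apply is_derive_unique).
    replace (Derive (fun s => x3 s) t) with v3 by (symmetry; now apply is_derive_unique).
    ring.
Qed.

Lemma V_right_continuous (x1 x2 x3 : R -> R) :
  filterlim x1 (at_right 0) (locally (x1 0)) ->
  filterlim x2 (at_right 0) (locally (x2 0)) ->
  filterlim x3 (at_right 0) (locally (x3 0)) ->
  filterlim (fun s => V (x1 s) (x2 s) (x3 s)) (at_right 0) (locally (V (x1 0) (x2 0) (x3 0))).
Proof.
  intros H1 H2 H3. unfold V, lyap_form. apply filterlim_qform; filterlim_arith.
Qed.

Theorem host_vector_asymptotically_stable :
  locally_asymptotically_stable
    (fun IH IM J => K1 * f J * IM - gamma * IH) (fun IH IM J => K2 * f J * IH - mu * IM)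
    (fun IH IM J => k * IH - k * J) IHs IMs Js.
Proof.
  destruct sq_dist3_le_V as [C1 [HC1 Hlow]].
  destruct V_le_sq_dist3 as [C2 [HC2 Hup]].
  destruct V_decreasing as [c [r [Hc [Hr Hdec]]]].
  exact (lyapunov_asymptotically_stable F1 F2 F3 IHs IMs Js V DV C1 C2 c r HC1 HC2 Hc Hr
           V_derive V_right_continuous Hlow Hup Hdec).
Qed.

End HostVectorModel.

Lemma pfun_bounds (a w : R -> R) (x : R) : 0 < a x -> 0 < w x -> 0 < pfun a w x < 1.
Proof.
  intros Ha Hw. unfold pfun. split; [apply Rdiv_lt_0_compat; lra|].
  apply Rmult_lt_reg_r with (a x + w x); [lra|]. field_simplify; lra.
Qed.

Lemma cfun_pos p q : 0 <= p < 1 -> 0 <= q -> 0 < cfun p q.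
Proof. intros Hp Hq. unfold cfun. nra. Qed.

Lemma cfun_pfun_pos (a w : R -> R) (q x : R) : 0 < a x -> 0 < w x -> 0 <= q ->
  0 < cfun (pfun a w x) q.
Proof. intros Ha Hw Hq. apply cfun_pos; [generalize (pfun_bounds a w x Ha Hw); lra | exact Hq]. Qed.

Lemma hfun_pos l p q : 0 <= l -> 0 < cfun p q -> 0 < hfun l p q.
Proof. intros Hl Hc. unfold hfun. apply Rdiv_lt_0_compat; lra. Qed.

Lemma hfun_no_latency p q : 0 < cfun p q -> hfun 0 p q = 1.
Proof. intros Hc. unfold hfun. field. lra. Qed.

Lemma is_derive_ffun (a w da dw : R -> R) (l q x : R) :
  0 < a x -> 0 < w x -> is_derive a x (da x) -> is_derive w x (dw x) -> 0 <= q -> 0 <= l ->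
  is_derive (ffun a w l q) x
    ((da x * w x - a x * dw x) / (a x + w x) ^ 2 * (- (1 - q) * l / (cfun (pfun a w x) q + l) ^ 2)).
Proof.
  intros Ha Hw Hda Hdw Hq Hl.
  assert (Hc := cfun_pfun_pos a w q x Ha Hw Hq).
  assert (Hp : is_derive (pfun a w) x ((da x * w x - a x * dw x) / (a x + w x) ^ 2)).
  { unfold pfun. auto_derive.
    - repeat split; try lra; [exists (da x) | exists (da x) | exists (dw x)]; assumption.
    - replace (Derive (fun y => a y) x) with (da x) by (symmetry; now apply is_derive_unique).
      replace (Derive (fun y => w y) x) with (dw x) by (symmetry; now apply is_derive_unique).
      field. lra. }
  assert (Hh : is_derive (fun p => hfun l p q) (pfun a w x)
                 (- (1 - q) * l / (cfun (pfun a w x) q + l) ^ 2)).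
  { unfold hfun, cfun in *. auto_derive; [lra|]. field. lra. }
  exact (is_derive_comp (fun p => hfun l p q) (pfun a w) x _ _ Hh Hp).
Qed.

Lemma ffun_strictly_decreasing_derive (a w da dw : R -> R) (l q x : R) :
  0 < a x -> 0 < w x -> is_derive a x (da x) -> is_derive w x (dw x) ->
  0 < da x -> dw x <= 0 -> 0 <= q < 1 -> 0 < l ->
  exists d, 0 < d /\ is_derive (ffun a w l q) x (- d).
Proof.
  intros Ha Hw Hda Hdw Hda_pos Hdw_nonpos Hq Hl.
  assert (Hc := cfun_pfun_pos a w q x Ha Hw (proj1 Hq)).
  set (dp := (da x * w x - a x * dw x) / (a x + w x) ^ 2).
  set (dh := (1 - q) * l / (cfun (pfun a w x) q + l) ^ 2).
  exists (dp * dh). split.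
  - unfold dp, dh. apply Rmult_lt_0_compat; apply Rdiv_lt_0_compat; try positive_poly. nra.
  - replace (- (dp * dh)) with (dp * (- (1 - q) * l / (cfun (pfun a w x) q + l) ^ 2))
      by (unfold dh; field; lra).
    apply is_derive_ffun; lra || assumption.
Qed.

Lemma Re_hat_at_equilibrium (bHM bMH gamma mu rho SH fs : R) :
  0 < gamma -> 0 < mu -> 0 < fs -> bHM * rho * SH * fs * (bMH * fs) = gamma * mu ->
  Re_hat bHM bMH gamma mu rho SH * fs = 1.
Proof.
  intros Hgamma Hmu Hfs Hprod. unfold Re_hat.
  replace (bHM * bMH / (gamma * mu) * rho * SH) with ((/ fs) ^ 2).
  - rewrite sqrt_pow2 by (left; apply Rinv_0_lt_compat, Hfs). field. lra.
  - apply Rmult_eq_reg_r with (gamma * mu * fs ^ 2); [|apply Rgt_not_eq; unfold Rgt; positive_poly].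
    rewrite <- Hprod at 1. field. lra.
Qed.

Theorem mainTheorem15
  (a w da dw : R -> R)
  (Ha_pos : forall x, 0 <= x -> 0 < a x)
  (Hw_pos : forall x, 0 <= x -> 0 < w x)
  (Ha_der : forall x, 0 <= x -> is_derive a x (da x))
  (Hw_der : forall x, 0 <= x -> is_derive w x (dw x))
  (Hda_cont : forall x, 0 <= x -> continuous da x)
  (Hdw_cont : forall x, 0 <= x -> continuous dw x)
  (Hda_pos : forall x, 0 <= x -> 0 < da x)
  (Hdw_nonpos : forall x, 0 <= x -> dw x <= 0)
  (q l SH bHM bMH gamma mu rho k : R)
  (Hq : 0 <= q < 1) (Hl : 0 <= l) (HSH : 0 < SH)
  (HbHM : 0 < bHM) (HbMH : 0 < bMH) (Hgamma : 0 < gamma) (Hmu : 0 < mu)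
  (Hrho : 0 < rho)
  (HRe : Re_hat bHM bMH gamma mu rho SH * hfun l (pfun a w 0) q > 1)
  (IHs IMs Js : R)
  (Heq1 : rhs_IH a w l q bHM rho SH gamma IHs IMs Js = 0)
  (Heq2 : rhs_IM a w l q bMH mu IHs IMs Js = 0)
  (Heq3 : rhs_J k IHs IMs Js = 0)
  (HIHs : 0 < IHs)
  (Hgm : gamma >= mu)
  (Hk : 0 < k) :
  locally_asymptotically_stable
    (rhs_IH a w l q bHM rho SH gamma) (rhs_IM a w l q bMH mu) (rhs_J k)
    IHs IMs Js.
Proof.
  unfold rhs_IH, rhs_IM, rhs_J in *.
  assert (HJs : Js = IHs) by (apply Rmult_eq_reg_l with k; lra).
  assert (HJs0 : 0 <= Js) by lra.
  assert (Hc : forall x, 0 <= x -> 0 < cfun (pfun a w x) q).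
  { intros x Hx. apply cfun_pfun_pos; [apply Ha_pos | apply Hw_pos | lra]; exact Hx. }
  assert (Hfs : 0 < ffun a w l q Js) by (apply hfun_pos; auto).
  assert (HIMs : 0 < IMs).
  { apply Rmult_lt_reg_l with mu; [exact Hmu|]. rewrite Rmult_0_r.
    replace (mu * IMs) with (bMH * ffun a w l q Js * IHs) by lra. positive_poly. }
  assert (Hlpos : 0 < l).
  { destruct Hl as [Hl | <-]; [exact Hl|exfalso].
    unfold ffun in Heq1, Heq2.
    rewrite (hfun_no_latency _ _ (Hc 0 (Rle_refl 0))) in HRe.
    rewrite (hfun_no_latency _ _ (Hc Js HJs0)) in Heq1, Heq2.
    assert (Re_hat bHM bMH gamma mu rho SH * 1 = 1); [|lra].
    apply Re_hat_at_equilibrium; try lra.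
    apply (equilibrium_product _ _ _ _ IHs IMs); lra. }
  destruct (ffun_strictly_decreasing_derive a w da dw l q Js (Ha_pos Js HJs0) (Hw_pos Js HJs0)
              (Ha_der Js HJs0) (Hw_der Js HJs0) (Hda_pos Js HJs0) (Hdw_nonpos Js HJs0) Hq Hlpos)
    as [dd [Hdd Hder]].
  apply (host_vector_asymptotically_stable (ffun a w l q) (bHM * rho * SH) bMH gamma mu k
           IHs IMs Js dd); try positive_poly; try lra; assumption.
Qed.
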